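(* Let $(X,S)$ be an $S$-metric space. A sequence $\{x_n\}$ in $X$ is statistically bounded if and only if there exists a non-negative real number $r$ such that $st\text{-}LIM^r x_n\neq\emptyset$.
   Context: An $S$-metric on a nonempty set $X$ is a function $S:X^3\to[0,\infty)$ such that for all $x,y,z,a\in X$: $S(x,y,z)=0$ if and only if $x=y=z$, and $S(x,y,z)\le S(x,x,a)+S(y,y,a)+S(z,z,a)$. For $B\subset\mathbb N$ the natural density is $\delta(B)=\lim_{n\to\infty}\frac{|\{k\in B:k\le n\}|}{n}$ when the limit exists. A sequence $\{x_n\}$ is statistically bounded if for any fixed $u\in X$ there exists a positive real number $B$ such that $\delta(\{n\in\mathbb N: S(x_n,x_n,u)\ge B\})=0$. For $r\ge0$, $\{x_n\}$ is $r$-statistically convergent to $x$ if for every $\varepsilon>0$, $\delta(\{n\in\mathbb N: S(x_n,x_n,x)\ge r+\varepsilon\})=0$; $st\text{-}LIM^r x_n$ denotes the set of all such $x\in X$. *)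

From Stdlib Require Import Reals Lra Lia.
Open Scope R_scope.

Definition is_S_metric {X : Type} (S : X -> X -> X -> R) : Prop :=
  (forall x y z, 0 <= S x y z) /\
  (forall x y z, S x y z = 0 <-> (x = y /\ y = z)) /\
  (forall x y z a, S x y z <= S x x a + S y y a + S z z a).

Fixpoint count_upto (P : nat -> bool) (n : nat) : nat :=
  match n with
  | O => O
  | S m => (if P (S m) then 1 else 0) + count_upto P m
  end%nat.

Definition has_density (P : nat -> bool) (d : R) : Prop :=
  Un_cv (fun n => INR (count_upto P n) / INR n) d.

Definition Rleb (a b : R) : bool := if Rle_dec a b then true else false.

(* sequence x indexed by n in N = {1,2,...} (x 0 is irrelevant) *)
Definition stat_bounded {X : Type} (S : X -> X -> X -> R) (x : nat -> X) : Prop :=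
  forall u : X, exists B : R, 0 < B /\
    has_density (fun n => Rleb B (S (x n) (x n) u)) 0.

Definition r_stat_conv {X : Type} (S : X -> X -> X -> R) (r : R) (x : nat -> X) (l : X) : Prop :=
  forall eps : R, 0 < eps ->
    has_density (fun n => Rleb (r + eps) (S (x n) (x n) l)) 0.

Definition st_LIM {X : Type} (S : X -> X -> X -> R) (r : R) (x : nat -> X) : X -> Prop :=
  fun l => r_stat_conv S r x l.

(* A statistical bound B at a centre u makes u an r-statistical limit point with r = B.
   Conversely, the triangle axiom with apex l gives S(x_n, x_n, u) <= 2 S(x_n, x_n, l) + S(u, u, l),
   so an r-statistical limit l bounds the sequence around every u by 2 (r + 1) + S(u, u, l). *)

From Stdlib Require Import Reals Lra Lia.
Open Scope R_scope.

Lemma Rleb_iff (a b : R) : Rleb a b = true <-> a <= b.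
Proof.
  unfold Rleb; destruct (Rle_dec a b); split; intros; auto; discriminate || contradiction.
Qed.

Lemma count_upto_mono (P Q : nat -> bool) :
  (forall n, P n = true -> Q n = true) ->
  forall n, (count_upto P n <= count_upto Q n)%nat.
Proof.
  intros PQ n; induction n as [|n IH]; simpl; [lia|].
  destruct (P (S n)) eqn:HP.
  - rewrite (PQ _ HP); lia.
  - destruct (Q (S n)); lia.
Qed.

Lemma has_density0_subset (P Q : nat -> bool) :
  (forall n, P n = true -> Q n = true) -> has_density Q 0 -> has_density P 0.
Proof.
  intros PQ HQ eps Heps.
  destruct (HQ eps Heps) as [N HN]; exists N; intros n Hn.
  specialize (HN n Hn); unfold R_dist in *; rewrite Rminus_0_r in *.
  eapply Rle_lt_trans; [|exact HN].
  unfold Rdiv; rewrite !Rabs_mult.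
  apply Rmult_le_compat_r; [apply Rabs_pos|].
  rewrite !Rabs_right by (apply Rle_ge, pos_INR).
  apply le_INR, count_upto_mono, PQ.
Qed.

Lemma S_metric_le_recentre {X : Type} (S : X -> X -> X -> R) (y u l : X) :
  is_S_metric S -> S y y u <= 2 * S y y l + S u u l.
Proof.
  intros [_ [_ Htri]]; pose proof (Htri y y u l); lra.
Qed.

Lemma st_LIM_of_stat_bound {X : Type} (S : X -> X -> X -> R) (x : nat -> X) (u : X) (B : R) :
  has_density (fun n => Rleb B (S (x n) (x n) u)) 0 -> st_LIM S B x u.
Proof.
  intros HB eps Heps; refine (has_density0_subset _ _ _ HB).
  intros n Hn; apply Rleb_iff in Hn; apply Rleb_iff; lra.
Qed.

Lemma stat_bounded_of_st_LIM {X : Type} (S : X -> X -> X -> R) (x : nat -> X) (r : R) (l : X) :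
  is_S_metric S -> 0 <= r -> st_LIM S r x l -> stat_bounded S x.
Proof.
  intros HS Hr Hl u; exists (2 * (r + 1) + S u u l); split.
  - destruct HS as [Hpos _]; specialize (Hpos u u l); lra.
  - refine (has_density0_subset _ _ _ (Hl 1 Rlt_0_1)).
    intros n Hn; apply Rleb_iff in Hn; apply Rleb_iff.
    pose proof (S_metric_le_recentre S (x n) u l HS); lra.
Qed.

Theorem theorem4p6 (X : Type) (S : X -> X -> X -> R) (x : nat -> X) :
  inhabited X -> is_S_metric S ->
  (stat_bounded S x <-> exists r : R, 0 <= r /\ exists l : X, st_LIM S r x l).
Proof.
  intros [u] HS; split.
  - intros Hb; destruct (Hb u) as [B [HB Hdens]].
    exists B; split; [lra|].
    exists u; exact (st_LIM_of_stat_bound S x u B Hdens).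
  - intros [r [Hr [l Hl]]]; exact (stat_bounded_of_st_LIM S x r l HS Hr Hl).
Qed.
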